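(* Let $m \equiv 3 \pmod 4$ with $m > 3$, $n = 3^m - 1$, $v = (3^{(m+1)/2}+1)/2$ and $\delta = (3^{(m-1)/2}+7)/2$. Then $\gcd(v,n) = 1$, and, setting $T_{(0,3,m)}(v) = \{ vi \bmod n : i \in T_{(0,3,m)}\}$, we have $\{1, 2, \ldots, \delta-1\} \subseteq T_{(0,3,m)}(v)$.
   Context: For an integer $0 \le j \le n-1$ with $3$-adic expansion $j = \sum_{t=0}^{m-1} j_t 3^t$, $j_t \in \{0,1,2\}$, let $w_3(j) = \sum_{t=0}^{m-1} j_t$. For distinct $i_1,i_2 \in \{0,1,2,3\}$, $T_{(i_1,i_2,m)} = \{1 \le j \le n-1 : w_3(j) \equiv i_1 \text{ or } i_2 \pmod 4\}$. For an integer $b$, $b \bmod n$ is the unique $b_0 \in \{0,\ldots,n-1\}$ with $b \equiv b_0 \pmod n$. *)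

From mathcomp Require Import all_boot.
Set Implicit Arguments. Unset Strict Implicit. Unset Printing Implicit Defensive.

Definition w3 (m j : nat) : nat := \sum_(t < m) ((j %/ 3 ^ t) %% 3).

Definition inT (i1 i2 m j : nat) : bool :=
  [&& 1 <= j, j <= (3 ^ m - 1) - 1 &
      (w3 m j %% 4 == i1 %% 4) || (w3 m j %% 4 == i2 %% 4)].

(* Put m = 2h + 1 and 3^h = 2P + 1 (P is odd because h is), so that n = 2N with
   N = 6P^2 + 6P + 1 and v = 3P + 2. Since v (6P + 2) = 3N + 1 and v N = N (mod n),
   k has the v-preimage k (6P + 2) when k is even and N + k (6P + 2) when k <= P is
   odd; the remaining value k = P + 2 has the preimage 8P + 3. Split in base 3 into
   a high block of h digits and a low block of h + 1 digits, each preimage has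
   digit sum 2h + 2 = 0 or 2h + 1 = 3 (mod 4): the two blocks are digitwise
   complementary (y and 3^r - 1 - y), or, in the odd case, they hold P + k and
   P - k, whose digits are symmetric about those of the repunit P. *)
From mathcomp Require Import all_boot zify.

Lemma w3S r j : w3 r.+1 j = j %% 3 + w3 r (j %/ 3).
Proof.
rewrite /w3 big_ord_recl /= expn0 divn1; congr (_ + _).
by apply: eq_bigr => t _; rewrite /bump /= expnS divnMA.
Qed.

Lemma w3_0 r : w3 r 0 = 0.
Proof. by apply: big1 => t _; rewrite div0n. Qed.

Lemma w3_cat s r a b : b < 3 ^ s -> w3 (s + r) (a * 3 ^ s + b) = w3 s b + w3 r a.
Proof.
elim: s b => [|s IHs] b hb.
  rewrite expn0 in hb *; have -> : b = 0 by lia.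
  by rewrite muln1 addn0 add0n /w3 big_ord0.
rewrite addSn !w3S expnS in hb *.
have -> : (a * (3 * 3 ^ s) + b) %% 3 = b %% 3 by lia.
have -> : (a * (3 * 3 ^ s) + b) %/ 3 = a * 3 ^ s + b %/ 3 by lia.
rewrite IHs; lia.
Qed.

Lemma w3_small s r j : j < 3 ^ s -> w3 (s + r) j = w3 s j.
Proof. by move=> hj; rewrite -[j]add0n -[0]/(0 * 3 ^ s) w3_cat // w3_0 addn0. Qed.

Lemma w3_compl r y : y < 3 ^ r -> w3 r y + w3 r (3 ^ r - 1 - y) = 2 * r.
Proof.
elim: r y => [|r IHr] y hy; first by rewrite /w3 !big_ord0.
rewrite !w3S expnS in hy *.
have -> : (3 * 3 ^ r - 1 - y) %% 3 = 2 - y %% 3 by lia.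
have -> : (3 * 3 ^ r - 1 - y) %/ 3 = 3 ^ r - 1 - y %/ 3 by lia.
have := IHr (y %/ 3) (ltac:(lia)); lia.
Qed.

(* p is the repunit 11...1 in base 3, so the digits of p + k and p - k are
   1 + e and 1 - e for the balanced-ternary digits e of k. *)
Lemma w3_balanced r p k : 2 * p + 1 = 3 ^ r -> k <= p ->
  w3 r (p + k) + w3 r (p - k) = 2 * r.
Proof.
elim: r p k => [|r IHr] p k hp hk; first by rewrite /w3 !big_ord0.
rewrite !w3S expnS in hp *.
have hp3 : 2 * (p %/ 3) + 1 = 3 ^ r by lia.
have [k' [Ek' carry]] : exists k', k' <= p %/ 3 /\
    (p + k) %/ 3 = p %/ 3 + k' /\ (p - k) %/ 3 = p %/ 3 - k' /\
    (p + k) %% 3 + (p - k) %% 3 = 2.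
  case: (ltnP (k %% 3) 2) => hk3; [exists (k %/ 3) | exists (k %/ 3).+1]; lia.
move: carry => [-> [-> carry]].
have := IHr (p %/ 3) k' hp3 Ek'; lia.
Qed.

Set Implicit Arguments.
Unset Strict Implicit.

Section ModularPreimages.

Variable P : nat.

Let N := 6 * P * P + 6 * P + 1.
Let v := 3 * P + 2.

Lemma mulv_6P2 : v * (6 * P + 2) = 3 * N + 1.
Proof. by rewrite /v /N; nia. Qed.

Lemma mul_preimage_even k : ~~ odd k -> k < 2 * N ->
  v * (k * (6 * P + 2)) %% (2 * N) = k.
Proof.
move=> hk klt; have -> : v * (k * (6 * P + 2)) = (3 * k./2) * (2 * N) + k.
  have Ek : k = 2 * k./2 by lia.
  by rewrite mulnCA mulv_6P2; nia.
by rewrite modnMDl modn_small.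
Qed.

Hypothesis oddP : odd P.

Lemma coprime_v_n : coprime v (2 * N).
Proof.
rewrite coprimeMr coprimen2 /v oddD oddM oddP /=.
have : coprime (v * (6 * P + 2)) N by rewrite mulv_6P2 /coprime gcdnC gcdnMDl gcdn1.
by rewrite coprimeMl => /andP[].
Qed.

Lemma mul_preimage_odd k : odd k -> k < 2 * N ->
  v * (N + k * (6 * P + 2)) %% (2 * N) = k.
Proof.
move=> hk klt.
have -> : v * (N + k * (6 * P + 2)) = (3 * P./2 + 4 + 3 * k./2) * (2 * N) + k.
  rewrite mulnDr mulnCA mulv_6P2 {1}/v.
  have Ek : k = 2 * k./2 + 1 by lia.
  have EP : P = 2 * P./2 + 1 by lia.
  nia.
by rewrite modnMDl modn_small.
Qed.

Lemma mul_preimage_last : v * (8 * P + 3) %% (2 * N) = P + 2.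
Proof.
have -> : v * (8 * P + 3) = 2 * (2 * N) + (P + 2) by rewrite /v /N; nia.
by rewrite modnMDl modn_small /N; nia.
Qed.

End ModularPreimages.

Section DigitSums.

Variables h P : nat.
Hypothesis pow3h : 3 ^ h = 2 * P + 1.

Let N := 6 * P * P + 6 * P + 1.

Lemma pow3_2h1_sub1 : 3 ^ (2 * h + 1) - 1 = 2 * N.
Proof.
by rewrite (_ : 2 * h + 1 = h + h + 1) ?expnD ?pow3h; [rewrite /N; nia | lia].
Qed.

Lemma half_pow3_h1_add1 : (3 ^ (h + 1) + 1) %/ 2 = 3 * P + 2.
Proof. by rewrite expnD pow3h; lia. Qed.

Lemma w3_preimage_even k : 0 < k <= 2 * P + 1 ->
  w3 (2 * h + 1) (k * (6 * P + 2)) = 2 * h + 2.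
Proof.
move=> hk; have pow3hS : 3 ^ h.+1 = 6 * P + 3 by rewrite expnS pow3h; lia.
have -> : k * (6 * P + 2) = (k - 1) * 3 ^ h.+1 + (3 ^ h.+1 - 1 - (k - 1)).
  by rewrite pow3hS; nia.
rewrite (_ : 2 * h + 1 = h.+1 + h); last by lia.
rewrite w3_cat; last by rewrite pow3hS; lia.
rewrite -(w3_small h 1) ?addn1; last by rewrite pow3h; lia.
by rewrite addnC w3_compl; [lia | rewrite pow3hS; lia].
Qed.

Lemma w3_preimage_odd k : k <= P -> w3 (2 * h + 1) (N + k * (6 * P + 2)) = 2 * h + 1.
Proof.
move=> hk; have pow3hS : 3 ^ h.+1 = 6 * P + 3 by rewrite expnS pow3h; lia.
have -> : N + k * (6 * P + 2) = (P + k) * 3 ^ h.+1 + (1 * 3 ^ h + (P - k)).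
  by rewrite pow3hS pow3h /N; nia.
rewrite (_ : 2 * h + 1 = h.+1 + h); last by lia.
rewrite w3_cat; last by rewrite pow3hS; lia.
rewrite -addn1 w3_cat; last by rewrite pow3h; lia.
have := w3_balanced _ _ _ (esym pow3h) hk.
by rewrite addn1 w3S w3_0; lia.
Qed.

Lemma w3_preimage_last : 0 < h -> w3 (2 * h + 1) (8 * P + 3) = 2 * h + 1.
Proof.
move=> h_gt0; have w3_max : w3 h (3 ^ h - 1) = 2 * h.
  by have := w3_compl h 0; rewrite w3_0 subn0 pow3h; lia.
have w3_one : w3 h 1 = 1.
  by move: h_gt0; case: (h) => [//|r _]; rewrite w3S divn_small // w3_0.
have -> : 8 * P + 3 = 1 * 3 ^ h.+1 + (3 ^ h - 1) by rewrite expnS pow3h; lia.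
rewrite (_ : 2 * h + 1 = h.+1 + h); last by lia.
rewrite w3_cat; last by rewrite expnS pow3h; lia.
rewrite -addn1 w3_small; last by rewrite pow3h; lia.
by rewrite w3_max w3_one; lia.
Qed.

End DigitSums.

Lemma preimage_exists h P k : 3 ^ h = 2 * P + 1 -> odd P -> 1 < P -> 0 < k <= P + 3 ->
  exists2 i, 0 < i < 3 ^ (2 * h + 1) - 1 /\
    (w3 (2 * h + 1) i = 2 * h + 1 \/ w3 (2 * h + 1) i = 2 * h + 2) &
    k = (3 * P + 2) * i %% (3 ^ (2 * h + 1) - 1).
Proof.
move=> pow3h P_odd P_gt1 hk; rewrite (pow3_2h1_sub1 pow3h).
set N := 6 * P * P + 6 * P + 1; have hkN : k < 2 * N by rewrite /N; nia.
case: (boolP (odd k)) => [k_odd | k_even].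
- have [kP | Pk] := leqP k P.
    exists (N + k * (6 * P + 2)); last by rewrite mul_preimage_odd.
    by split; [rewrite /N; nia | left; apply: w3_preimage_odd].
  have -> : k = P + 2 by lia.
  exists (8 * P + 3); last by rewrite mul_preimage_last.
  have h_gt0 : 0 < h by move: pow3h; case: (h) => //; rewrite expn0; lia.
  by split; [rewrite /N; nia | left; apply: w3_preimage_last].
- exists (k * (6 * P + 2)); last by rewrite mul_preimage_even.
  by split; [rewrite /N; nia | right; apply: w3_preimage_even; lia].
Qed.

Lemma pow3_mod4_odd h : odd h -> 3 ^ h %% 4 = 3.
Proof.
move=> h_odd; have -> : h = 2 * h./2 + 1 by lia.
by rewrite expnD expnM -modnMml -modnXm /= exp1n.
Qed.

Theorem lemma2 (m : nat) (hm4 : m %% 4 = 3) (hm : 3 < m) :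
  let n := 3 ^ m - 1 in
  let v := (3 ^ ((m + 1) %/ 2) + 1) %/ 2 in
  let delta := (3 ^ ((m - 1) %/ 2) + 7) %/ 2 in
  gcdn v n = 1 /\
  (forall k, 1 <= k <= delta - 1 ->
     exists2 i, inT 0 3 m i & k = (v * i) %% n).
Proof.
move=> n v delta; rewrite /n /v /delta {n v delta}.
set h := (m - 1) %/ 2.
have Em : m = 2 * h + 1 by lia.
have h_odd : odd h by lia.
have pow3h_mod4 := pow3_mod4_odd h_odd.
set P := 3 ^ h %/ 2.
have pow3h : 3 ^ h = 2 * P + 1 by lia.
have P_odd : odd P by lia.
have P_gt1 : 1 < P.
  suff : 3 ^ 3 <= 3 ^ h by lia.
  by rewrite leq_exp2l //; lia.
have -> : (m + 1) %/ 2 = h + 1 by lia.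
rewrite /inT Em (half_pow3_h1_add1 pow3h); split.
  by rewrite (pow3_2h1_sub1 pow3h); exact/eqP/coprime_v_n.
move=> k hk; have hkP : 0 < k <= P + 3 by lia.
have [i [hi hw] ->] := preimage_exists pow3h P_odd P_gt1 hkP.
exists i => //; apply/and3P; split; [lia | lia |].
by apply/orP; case: hw => ->; [right | left]; apply/eqP; lia.
Qed.
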